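(* Under the setting in the context, the matrices $Q_\beta$, $V_\beta$, $K_\beta$ satisfy $$\det(I-t\,V_\beta)=\det(I-t\,Q_\beta)\,\det(I-t\,K_\beta).$$
   Context: Setting. Let $I\subset\mathbb{R}$ be a compact interval and $f_i(x)=\rho_ix+\varrho_i$ ($i=1,\dots,n$), $0<|\rho_i|<1$, an IFS with the open set condition. Assume $I$ is the union of a nonempty open interval $I_h$ (the hole) and $f_1(I),\dots,f_n(I)$, with pairwise disjoint interiors and $I_h$ disjoint from the $f_i(I)$. Let $F(x)=f_i^{-1}(x)$ on $f_i(I)$. The laps $I_1,\dots,I_n$ (the $f_i(I)$ in left-to-right order) and the hole have endpoints $a_1<\dots<a_{n+2}$, hole $=(a_h,a_{h+1})$; interior endpoints are the turning/discontinuity points. Assume the forward orbit of every one-sided endpoint $a_i^\pm$ is finite (periodic, eventually periodic, or falling into the hole). Markov partition and $Q_\beta$: the points of these orbits together with the $a_i$, ordered, cut $I$ into intervals $J_1,\dots,J_m$; $A=[a_{ij}]$, $a_{ij}=1$ iff $F(\mathrm{int}J_j)\supseteq\mathrm{int}J_i$; $Q_\beta=[a_{ij}|F'|_{J_j}|^{-\beta}]$, $\beta\in\mathbb{R}$. Points $y^{(i)}$: list, ordered along $I$, the one-sided endpoints $a_1^+,a_2^-,a_2^+,\dots,a_{n+1}^-,a_{n+1}^+,a_{n+2}^-$ (each $a_i^-,a_i^+$ as two consecutive entries, $a_i^-$ first) together with all other points of the forward orbits of these one-sided endpoints; call them $y^{(1)},\dots,y^{(q)}$ and identify $y^{(i)}$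 with the $i$-th standard basis vector of $\mathbb{R}^q$. $V_\beta=[v_{ij}]$ ($q\times q$): for each $j$, if $F(y^{(j)})=y^{(i)}$ put $v_{ij}=\varepsilon(y^{(j)})|F'(y^{(j)})|^{-\beta}$, $\varepsilon$ the sign of $F'$ at $y^{(j)}$ (the column is zero if $y^{(j)}$ is a limit from inside the hole). Further, for every pair of consecutive entries that are the two one-sided versions of a turning/discontinuity point lying between $y^{(j)}$ and $y^{(i)}$: if $y^{(i)}>y^{(j)}$ and the pair is $y^{(k)},y^{(k+1)}$ with $j\le k<i$, put $v_{kj}=v_{ij}$, $v_{k+1,j}=-v_{ij}$; if $y^{(i)}<y^{(j)}$ and the pair is $y^{(k-1)},y^{(k)}$ with $i<k\le j$, put $v_{k-1,j}=-v_{ij}$, $v_{kj}=v_{ij}$. All other entries are $0$. $K_\beta$ is the $n\times n$ diagonal matrix with $k_{ii}=\varepsilon(I_i)|F'|_{I_i}|^{-\beta}$, $\varepsilon(I_i)$ the sign of $F'$ on lap $I_i$. *)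

From HB Require Import structures.
From mathcomp Require Import all_boot all_order all_algebra.
From mathcomp Require Import fingroup perm.
From mathcomp Require Import boolp classical_sets cardinality reals exp.
Set Implicit Arguments. Unset Strict Implicit. Unset Printing Implicit Defensive.
Import Order.TTheory GRing.Theory Num.Theory.
Local Open Scope ring_scope.
Local Open Scope classical_set_scope.

(* Conventions (0-based):
   I = [a 0, a n.+1]; endpoints a 0 < a 1 < ... < a n.+1 (paper: a_1<...<a_{n+2});
   hole = (a h, a h.+1);  laps k : 'I_n in left-to-right order;
   the IFS maps are f_i x = rho i * x + vrho i, i : 'I_n, and the permutation
   g says that lap k = f_(g k)(I).  One-sided points are pairs (x, s) with
   s = true meaning x^+ (right limit) and s = false meaning x^- (left limit). *)

Section Setting.
Variables (R : realType) (n h : nat) (a : nat -> R) (rho vrho : 'I_n -> R)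
  (g : {perm 'I_n}) (beta : R).

Definition lapli (k : 'I_n) : nat := if (k < h)%N then (k : nat) else k.+1.
Definition lapL (k : 'I_n) : R := a (lapli k).
Definition lapR (k : 'I_n) : R := a (lapli k).+1.

Definition fmap (i : 'I_n) (x : R) : R := rho i * x + vrho i.

(* branch of F on lap k : F = f_(g k)^-1 *)
Definition Fbr (k : 'I_n) (x : R) : R := (x - vrho (g k)) / rho (g k).
Definition Fder (k : 'I_n) : R := (rho (g k))^-1.
Definition wt (k : 'I_n) : R := Num.sg (Fder k) * (`|Fder k| `^ (- beta)).

(* the one-sided point p = (x,s) lies in lap k, i.e. its side-neighbourhood does *)
Definition inlapb (k : 'I_n) (p : R * bool) : bool :=
  [&& lapL k <= p.1, p.1 <= lapR k,
      p.2 ==> (p.1 < lapR k) & (~~ p.2) ==> (lapL k < p.1)].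
Definition lapof (p : R * bool) : option 'I_n := [pick k : 'I_n | inlapb k p].

(* image of a one-sided point under F (None: it lies in / is a limit from the hole) *)
Definition Fimg (k : 'I_n) (p : R * bool) : R * bool :=
  (Fbr k p.1, if 0 < Fder k then p.2 else ~~ p.2).
Definition Fstep (p : R * bool) : option (R * bool) :=
  if lapof p is Some k then Some (Fimg k p) else None.

Definition Fiterate (m : nat) (p : R * bool) : option (R * bool) :=
  iter m (obind Fstep) (Some p).
Definition Forbit (e : R * bool) : set (R * bool) :=
  [set p | exists m, Fiterate m e = Some p].

Definition osend (p : R * bool) : Prop :=
  (exists k, (0 < k <= n.+1)%N /\ p = (a k, false)) \/
  (exists k, (k <= n)%N /\ p = (a k, true)).

(* one-sided versions are only kept at the endpoints a_k; elsewhere a point is a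
   single entry (normalised to side true) *)
Definition is_a (x : R) : bool := has (fun k => x == a k) (iota 0%N n.+2).
Definition normp (p : R * bool) : R * bool := if is_a p.1 then p else (p.1, true).

(* the entries y^(i): one-sided endpoints and all points of their forward orbits *)
Definition Ent : set (R * bool) :=
  [set p | exists e p0, osend e /\ Forbit e p0 /\ p = normp p0].
(* the points cutting I into the Markov partition *)
Definition Pos : set R := [set x | exists p, Ent p /\ p.1 = x].

Definition lexlt (p p' : R * bool) : bool :=
  (p.1 < p'.1) || [&& p.1 == p'.1, ~~ p.2 & p'.2].

(* correction coming from the pair (a l^-, a l^+), for column entry yj with
   image im, evaluated at row entry yi *)
Definition corr (l : nat) (yi yj im : R * bool) : R :=
  let am := (a l, false) in let ap := (a l, true) in
  if lexlt yj im then
    (if ~~ lexlt am yj && lexlt am im then (yi == am)%:R - (yi == ap)%:R else 0)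
  else if lexlt im yj then
    (if lexlt im ap && ~~ lexlt yj ap then (yi == ap)%:R - (yi == am)%:R else 0)
  else 0.

Definition Vmx (q : nat) (y : nat -> R * bool) : 'M[R]_q :=
  \matrix_(i < q, j < q)
    match lapof (y j) with
    | None => 0
    | Some k =>
        let im := normp (Fimg k (y j)) in
        wt k * ((y i == im)%:R + \sum_(1 <= l < n.+1) corr l (y i) (y j) im)
    end.

(* lap containing the Markov interval J_j = [z j, z j.+1] (None: the hole) *)
Definition Jlap (z : nat -> R) (j : nat) : option 'I_n :=
  [pick k : 'I_n | (lapL k <= z j) && (z j.+1 <= lapR k)].

Definition Qmx (m : nat) (z : nat -> R) : 'M[R]_m :=
  \matrix_(i < m, j < m)
    match Jlap z j with
    | None => 0
    | Some k =>
        (asbool ([set x | z i < x < z i.+1]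
                   `<=` [set Fbr k x | x in [set x | z j < x < z j.+1]]))%:R
        * (`|Fder k| `^ (- beta))
    end.

Definition Kmx : 'M[R]_n := diag_mx (\row_(k < n) wt k).

End Setting.

From HB Require Import structures.
From mathcomp Require Import all_boot all_order all_algebra.
From mathcomp Require Import fingroup perm.
From mathcomp Require Import boolp classical_sets cardinality reals exp.
From mathcomp Require Import zify ring lra.
Set Implicit Arguments. Unset Strict Implicit. Unset Printing Implicit Defensive.
Import Order.TTheory GRing.Theory Num.Theory.
Local Open Scope ring_scope.
Local Open Scope classical_set_scope.

(* Each branch of F maps its lap affinely onto the whole of I, so every
   one-sided endpoint is sent to a_0^+ or to a_(n+1)^-: the entries y^(i) are
   exactly the 2(n+1) one-sided endpoints, and the Markov partition is cut by
   the a_i alone.  Every column of Q_beta is then constant, whence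
   det(I - t Q_beta) = 1 - t sum_k |F'_k|^(-beta).  A column of V_beta is the
   weight of its lap times a staircase vector (image a_0^+), or times that
   staircase plus the alternating vector (image a_(n+1)^-), so V_beta = P M
   with P of size 2(n+1) x (n+2).  By Sylvester, det(I - t P M) = det(I - t M P),
   and M P is diagonal outside its first row, with corner entry
   sum_k |F'_k|^(-beta) and diagonal entries the weights of K_beta (and 0 for
   the hole). *)

Lemma det1B_mulmxC (R : comNzRingType) m k (A : 'M[R]_(m, k)) (B : 'M[R]_(k, m)) :
  \det (1%:M - A *m B) = \det (1%:M - B *m A).
Proof.
have lower_split : block_mx 1%:M A B 1%:M
    = block_mx 1%:M 0 B 1%:M *m block_mx 1%:M A 0 (1%:M - B *m A).
  by rewrite mulmx_block !mul1mx !mulmx1 !mul0mx !addr0 addrC subrK.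
have upper_split : block_mx 1%:M A B 1%:M
    = block_mx 1%:M A 0 1%:M *m block_mx (1%:M - A *m B) 0 B 1%:M.
  by rewrite mulmx_block !mul1mx !mulmx1 !mul0mx ?mulmx0 ?addr0 ?add0r subrK.
have := congr1 determinant lower_split.
rewrite upper_split !det_mulmx !det_lblock !det_ublock !det1 !mul1r !mulr1.
by move->.
Qed.

Lemma det1BZ_const_cols (R : comNzRingType) m (w : 'I_m -> R) (Q : 'M[R]_m) t :
  (forall i j, Q i j = w j) -> \det (1%:M - t *: Q) = 1 - t * \sum_j w j.
Proof.
move=> Qw; have -> : Q = const_mx 1 *m \row_j w j :> 'M_(m, m).
  by apply/matrixP => i j; rewrite Qw !mxE big_ord1 !mxE mul1r.
rewrite scalemxAl det1B_mulmxC det_mx11 !mxE mulr_sumr.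
by congr (_ - _); apply: eq_bigr => j _; rewrite !mxE mulr1 mulrC.
Qed.

Lemma det1BZ_diag (R : comNzRingType) n (d : 'rV[R]_n) t :
  \det (1%:M - t *: diag_mx d) = \prod_i (1 - t * d 0 i).
Proof.
have -> : 1%:M - t *: diag_mx d = diag_mx (\row_i (1 - t * d 0 i)).
  apply/matrixP => i j; rewrite !mxE; case: eqVneq => [->|_] /=.
    by rewrite !mulr1n.
  by rewrite !mulr0n mulr0 subr0.
by rewrite det_diag; apply: eq_bigr => i _; rewrite mxE.
Qed.

Lemma det1BZ_diag_below_row0 (R : comNzRingType) n (A : 'M[R]_n.+1) (d : 'I_n -> R) t :
  (forall i j, A (lift ord0 i) j = (j == lift ord0 i)%:R * d i) ->
  \det (1%:M - t *: A) = (1 - t * A ord0 ord0) * \prod_i (1 - t * d i).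
Proof.
move=> A_rows; rewrite -det_tr det_trig; last first.
  apply/is_trig_mxP => i j; rewrite !mxE.
  case: (unliftP ord0 j) => [j' ->|->] // i_lt; rewrite A_rows.
  have ne_ij : (i == lift ord0 j') = false by apply/negbTE; rewrite neq_ltn i_lt.
  by rewrite ne_ij eq_sym ne_ij mul0r mulr0 subr0.
rewrite big_ord_recl !mxE eqxx; congr (_ * _); apply: eq_bigr => i _.
by rewrite !mxE A_rows eqxx mul1r.
Qed.

Lemma big_ord_double (R : nmodType) (F : nat -> R) N :
  \sum_(j < N.*2) F j = \sum_(c < N) (F c.*2 + F c.*2.+1).
Proof.
elim: N => [|N IH]; first by rewrite !big_ord0.
by rewrite doubleS !big_ord_recr /= IH addrA.
Qed.

Lemma sum_nat_delta (R : pzSemiRingType) (F : nat -> R) c lo hi :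
  \sum_(lo <= l < hi) ((l == c)%:R * F l) = (lo <= c < hi)%N%:R * F c.
Proof.
under eq_bigr => l _ do rewrite mulr_natl mulrb.
by rewrite -big_mkcond big_nat1_eq mulr_natl mulrb.
Qed.

Lemma sum_ord_delta (R : pzSemiRingType) N (F : nat -> R) c : (c < N)%N ->
  \sum_(r < N) ((r == c :> nat)%:R * F r) = F c.
Proof.
move=> cN; rewrite -(big_mkord xpredT (fun r => (r == c)%:R * F r)).
by rewrite sum_nat_delta cN mul1r.
Qed.

Lemma sum_double_delta (R : pzSemiRingType) n i (F : nat -> R) :
  \sum_(1 <= l < n.+1) ((i == l.*2)%:R * F l)
  = (~~ odd i && (1 <= i./2 <= n))%N%:R * F i./2.
Proof.
rewrite (eq_big_nat _ _ (F2 := fun l => (l == i./2)%:R * ((~~ odd i)%:R * F l))).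
  by rewrite sum_nat_delta mulrA -natrM mulnb; congr (_%:R * _); lia.
by move=> l _; rewrite mulrA -natrM mulnb; congr (_%:R * _); lia.
Qed.

Lemma sum_double_pred_delta (R : pzSemiRingType) n i (F : nat -> R) :
  \sum_(1 <= l < n.+1) ((i == l.*2.-1)%:R * F l)
  = (odd i && (i./2 < n))%N%:R * F i./2.+1.
Proof.
rewrite (eq_big_nat _ _ (F2 := fun l => (l == i./2.+1)%:R * ((odd i)%:R * F l))).
  by rewrite sum_nat_delta mulrA -natrM mulnb; congr (_%:R * _); lia.
by move=> l /andP[l_gt0 _]; rewrite mulrA -natrM mulnb; congr (_%:R * _); lia.
Qed.

Lemma sorted_enum_eq (T : eqType) (lt : rel T) (f g : nat -> T) N M :
  irreflexive lt -> transitive lt ->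
  (forall i, (i.+1 < N)%N -> lt (f i) (f i.+1)) ->
  (forall i, (i.+1 < M)%N -> lt (g i) (g i.+1)) ->
  (forall x, (exists2 i, (i < N)%N & f i = x) <-> (exists2 i, (i < M)%N & g i = x)) ->
  N = M /\ (forall i, (i < N)%N -> f i = g i).
Proof.
move=> lt_irr lt_tr f_incr g_incr same_range.
have sorted_mkseq F K : (forall i, (i.+1 < K)%N -> lt (F i) (F i.+1)) ->
    sorted lt (mkseq F K).
  move=> F_incr; apply/(sortedP (F 0%N)) => i; rewrite size_mkseq => iK.
  by rewrite !nth_mkseq ?(ltnW iK) //; apply: F_incr.
have mem_mkseqP F K x : reflect (exists2 i, (i < K)%N & F i = x) (x \in mkseq F K).
  apply: (iffP mapP) => -[i]; first by rewrite mem_iota => /andP[_ iK] ->; exists i.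
  by move=> iK <-; exists i; rewrite ?mem_iota.
have fg : mkseq f N = mkseq g M.
  apply: (irr_sorted_eq lt_tr lt_irr); rewrite ?sorted_mkseq // => x.
  by apply/mem_mkseqP/mem_mkseqP => /same_range.
have NM : N = M by rewrite -(size_mkseq f N) fg size_mkseq.
split=> // i iN; rewrite -(nth_mkseq (f 0%N) f iN) fg nth_mkseq //.
by rewrite -NM.
Qed.

Lemma affine_onto_ends (R : realFieldType) (r v A B L U : R) :
  A <= B -> L <= U ->
  (fun x => r * x + v) @` [set x | A <= x <= B] = [set y | L <= y <= U] ->
  if 0 < r then r * A + v = L /\ r * B + v = U
  else r * A + v = U /\ r * B + v = L.
Proof.
move=> AB LU onto_LU.
have into x : A <= x <= B -> L <= r * x + v <= U.
  move=> x_in; suff : [set y | L <= y <= U] (r * x + v) by [].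
  by rewrite -onto_LU; exists x.
have onto y : L <= y <= U -> exists2 x, A <= x <= B & r * x + v = y.
  move=> y_in; have : [set y | L <= y <= U] y by [].
  by rewrite -onto_LU => -[x x_in <-]; exists x.
have /andP[fA_ge fA_le] := into A (ltac:(by rewrite lexx AB)).
have /andP[fB_ge fB_le] := into B (ltac:(by rewrite lexx AB)).
have [xL /andP[xL_ge xL_le] fxL] := onto L (ltac:(by rewrite lexx LU)).
have [xU /andP[xU_ge xU_le] fxU] := onto U (ltac:(by rewrite lexx LU)).
case: ifP => r_gt0.
- have : r * A <= r * xL by rewrite ler_pM2l.
  have : r * xU <= r * B by rewrite ler_pM2l.
  lra.
- have r_le0 : r <= 0 by rewrite leNgt r_gt0.
  have : r * xU <= r * A by rewrite ler_wnM2l.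
  have : r * B <= r * xL by rewrite ler_wnM2l.
  lra.
Qed.

Lemma lexlt_irr (R : realType) : irreflexive (@lexlt R).
Proof. by move=> p; rewrite /lexlt ltxx eqxx /=; case: p.2. Qed.

Lemma lexlt_trans (R : realType) : transitive (@lexlt R).
Proof.
move=> [x2 s2] [x1 s1] [x3 s3]; rewrite /lexlt /=.
case/orP => [h1|/and3P [/eqP e1 n1 b2]]; case/orP => [h2|/and3P [/eqP e2 n2 b3]].
- by rewrite (lt_trans h1 h2).
- by rewrite -e2 h1.
- by rewrite e1 h2.
- by rewrite b2 in n2.
Qed.

Section FullBranchIFS.
Variables (R : realType) (n h : nat) (a : nat -> R) (rho vrho : 'I_n -> R)
  (g : {perm 'I_n}) (beta : R).
Hypotheses (h_le_n : (h <= n)%N) (a_incr : forall i, (i <= n)%N -> a i < a i.+1)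
  (rho_neq0 : forall i, rho i != 0)
  (fmap_onto_lap : forall k : 'I_n,
     fmap rho vrho (g k) @` [set x | a 0%N <= x <= a n.+1]
     = [set x | lapL h a k <= x <= lapR h a k]).

Lemma ler_a i j : (i <= n.+1)%N -> (j <= n.+1)%N -> (a i <= a j) = (i <= j)%N.
Proof.
move=> i_le j_le; apply: (@Order.NatMonotonyTheory.incn_inP _ _ [pred i | i <= n.+1]%N);
  rewrite ?inE //.
- move=> i1 j1 _ j1n k /andP[_ kj]; rewrite !inE in j1n *.
  exact: leq_trans (ltnW kj) j1n.
- by move=> i1 _; rewrite !inE ltnS => /a_incr.
Qed.

Lemma ltr_a i j : (i <= n.+1)%N -> (j <= n.+1)%N -> (a i < a j) = (i < j)%N.
Proof. by move=> i_le j_le; rewrite ltNge ler_a // ltnNge. Qed.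

Lemma eqr_a i j : (i <= n.+1)%N -> (j <= n.+1)%N -> (a i == a j) = (i == j).
Proof. by move=> i_le j_le; rewrite eq_le !ler_a // -eqn_leq. Qed.

Lemma lapliE (k : 'I_n) : lapli h k = bump h k.
Proof. by rewrite /lapli /bump; case: ltnP => hk; lia. Qed.

Lemma lapli_le_n (k : 'I_n) : (lapli h k <= n)%N.
Proof. by rewrite lapliE /bump; have := ltn_ord k; lia. Qed.

(* Cell [c] is [a c, a c.+1]; it is a lap unless [c = h], the hole. *)
Definition cell_lap (c : nat) : option 'I_n := [pick k : 'I_n | lapli h k == c].

Lemma cell_lap_lapli (k : 'I_n) : cell_lap (lapli h k) = Some k.
Proof.
rewrite /cell_lap; case: pickP => [k' /eqP|/(_ k)]; last by rewrite eqxx.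
by rewrite !lapliE => /(can_inj (bumpK h))/val_inj ->.
Qed.

Lemma cell_lap_Some c (k : 'I_n) : cell_lap c = Some k -> lapli h k = c.
Proof. by rewrite /cell_lap; case: pickP => // k' /eqP E [<-]. Qed.

Lemma cell_lap_hole : cell_lap h = None.
Proof.
rewrite /cell_lap; case: pickP => // k; rewrite lapliE => /eqP bump_h.
by have := neq_bump h k; rewrite bump_h eqxx.
Qed.

(* [endpt c.*2] is a_c^+ and [endpt c.*2.-1] is a_c^-, so [endpt] lists the
   one-sided endpoints in the order of the entries y^(1), y^(2), ... *)
Definition endpt (i : nat) : R * bool := (a (odd i + i./2), ~~ odd i).

Lemma endpt_le i : (i < (n.+1).*2)%N -> (odd i + i./2 <= n.+1)%N.
Proof. by move=> ilt; have := odd_double_half i; case: (odd i) => /=; lia. Qed.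

Lemma lexlt_endpt i j : (i < (n.+1).*2)%N -> (j < (n.+1).*2)%N ->
  lexlt (endpt i) (endpt j) = (i < j)%N.
Proof.
move=> /endpt_le ilt /endpt_le jlt.
have := odd_double_half i; have := odd_double_half j.
by rewrite /lexlt /= ltr_a // eqr_a //; lia.
Qed.

Lemma eq_endpt i j : (i < (n.+1).*2)%N -> (j < (n.+1).*2)%N ->
  (endpt i == endpt j) = (i == j).
Proof.
move=> /endpt_le ilt /endpt_le jlt; rewrite xpair_eqE eqr_a //.
by have := odd_double_half i; have := odd_double_half j; lia.
Qed.

Lemma endpt_minus l : (0 < l)%N -> endpt l.*2.-1 = (a l, false).
Proof. by move=> l_gt0; rewrite /endpt; congr (a _, _); lia. Qed.

Lemma endpt_plus l : endpt l.*2 = (a l, true).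
Proof. by rewrite /endpt; congr (a _, _); lia. Qed.

Lemma endpt_last : endpt n.*2.+1 = (a n.+1, false).
Proof. by rewrite /endpt; congr (a _, _); lia. Qed.

Lemma inlapb_endpt (k : 'I_n) i : (i < (n.+1).*2)%N ->
  inlapb h a k (endpt i) = (lapli h k == i./2).
Proof.
move=> /endpt_le ilt; have k_le := lapli_le_n k; have := odd_double_half i.
by rewrite /inlapb /lapL /lapR /= !ler_a ?ltr_a //; lia.
Qed.

Lemma lapof_endpt i : (i < (n.+1).*2)%N -> lapof n h a (endpt i) = cell_lap i./2.
Proof. by move=> ilt; apply: eq_pick => k; rewrite /= inlapb_endpt. Qed.

Lemma normp_endpt i : (i < (n.+1).*2)%N -> normp n a (endpt i) = endpt i.
Proof.
move=> /endpt_le ilt; rewrite /normp /is_a; case: hasP => // -[].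
by exists (odd i + i./2)%N; rewrite ?mem_iota.
Qed.

Lemma osend_endptP e : osend n a e <-> exists2 i, (i < (n.+1).*2)%N & endpt i = e.
Proof.
split=> [[[k [kn ->]] | [k [kn ->]]] | [i ilt <-]].
- by exists k.*2.-1; rewrite ?endpt_minus //; lia.
- by exists k.*2; rewrite ?endpt_plus //; lia.
- have := endpt_le ilt; rewrite /osend /endpt; case: (odd i) => /= le_n1.
    by left; exists i./2.+1; split=> //; lia.
  by right; exists i./2; split=> //; lia.
Qed.

Lemma fmap_ends (k : 'I_n) :
  if 0 < rho (g k)
  then rho (g k) * a 0%N + vrho (g k) = lapL h a k
       /\ rho (g k) * a n.+1 + vrho (g k) = lapR h a k
  else rho (g k) * a 0%N + vrho (g k) = lapR h a k
       /\ rho (g k) * a n.+1 + vrho (g k) = lapL h a k.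
Proof.
apply: affine_onto_ends (fmap_onto_lap k); first by rewrite ler_a.
by rewrite /lapL /lapR ler_a //; have := lapli_le_n k; lia.
Qed.

Lemma Fimg_endpt (k : 'I_n) i : lapli h k = i./2 ->
  Fimg rho vrho g k (endpt i) =
    if (0 < Fder rho g k) == odd i then endpt n.*2.+1 else endpt 0.
Proof.
move=> k_at_i; have := fmap_ends k; have := rho_neq0 (g k).
rewrite endpt_last /Fimg /Fbr /Fder /fmap /endpt /= invr_gt0.
have -> : (odd i + i./2 = if odd i then (lapli h k).+1 else lapli h k)%N.
  by rewrite k_at_i; case: (odd i).
case: ifP => _ r_neq0 [f0 fn]; case: (odd i);
  rewrite /= ?addn0 -?[a (lapli h k).+1]/(lapR h a k) -?[a (lapli h k)]/(lapL h a k);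
  rewrite -?f0 -?fn;
  by congr (_, _); field.
Qed.

Lemma Fstep_endpt i p : (i < (n.+1).*2)%N -> Fstep h a rho vrho g (endpt i) = Some p ->
  exists2 j, (j < (n.+1).*2)%N & endpt j = p.
Proof.
move=> ilt; rewrite /Fstep lapof_endpt //.
case cell_i: (cell_lap i./2) => [k|] // [<-].
rewrite (Fimg_endpt (cell_lap_Some cell_i)).
by case: ifP => _; [exists n.*2.+1; first lia | exists 0%N].
Qed.

Lemma Forbit_endpt i p : (i < (n.+1).*2)%N -> Forbit h a rho vrho g (endpt i) p ->
  exists2 j, (j < (n.+1).*2)%N & endpt j = p.
Proof.
move=> ilt [m]; elim: m p => [|m IH] p; first by move=> [<-]; exists i.
rewrite /Fiterate iterS -/(Fiterate h a rho vrho g m (endpt i)).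
case: (Fiterate _ _ _ _ _ m _) (IH) => [p'|] //= /(_ p' erefl) [j jlt <-].
exact: Fstep_endpt.
Qed.

Lemma Ent_endptP p :
  Ent h a rho vrho g p <-> exists2 i, (i < (n.+1).*2)%N & endpt i = p.
Proof.
split=> [[e [p0 [/osend_endptP [i ilt <-] [orbit_p0 ->]]]] | [i ilt <-]].
  by have [j jlt <-] := Forbit_endpt ilt orbit_p0; exists j; rewrite ?normp_endpt.
exists (endpt i), (endpt i); rewrite normp_endpt //; split; last by split; [exists 0%N|].
by apply/osend_endptP; exists i.
Qed.

Lemma Pos_aP x : Pos h a rho vrho g x <-> exists2 i, (i <= n.+1)%N & a i = x.
Proof.
split=> [[p [/Ent_endptP [i ilt <-] <-]] | [i ilt <-]].
  by exists (odd i + i./2)%N; rewrite ?endpt_le.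
exists (endpt i.*2.-1); split; last by rewrite /endpt /=; congr a; lia.
by apply/Ent_endptP; exists i.*2.-1; first lia.
Qed.

Lemma corr_endpt_left l i j : (0 < l <= n)%N ->
  (i < (n.+1).*2)%N -> (j < (n.+1).*2)%N ->
  corr a l (endpt i) (endpt j) (endpt 0)
  = (l.*2 <= j)%N%:R * ((i == l.*2)%:R - (i == l.*2.-1)%:R).
Proof.
move=> /andP[l_gt0 l_le] ilt jlt.
rewrite /corr -(endpt_minus l_gt0) -endpt_plus !lexlt_endpt ?eq_endpt //; try lia.
by case: (leqP l.*2 j) => ?; rewrite ?mul0r ?mul1r; repeat case: ifP => ? //; lia.
Qed.

Lemma corr_endpt_right l i j : (0 < l <= n)%N ->
  (i < (n.+1).*2)%N -> (j < (n.+1).*2)%N ->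
  corr a l (endpt i) (endpt j) (endpt n.*2.+1)
  = (j <= l.*2.-1)%N%:R * ((i == l.*2.-1)%:R - (i == l.*2)%:R).
Proof.
move=> /andP[l_gt0 l_le] ilt jlt.
rewrite /corr -(endpt_minus l_gt0) -endpt_plus !lexlt_endpt ?eq_endpt //; try lia.
by case: (leqP j l.*2.-1) => ?; rewrite ?mul0r ?mul1r; repeat case: ifP => ? //; lia.
Qed.

(* In the basis of the entries [endpt i]: [left_col p] is the staircase
   e_0 + sum_(1 <= l <= p) (e_(a_l^+) - e_(a_l^-)), [alt_col] is sum_i (-1)^(i+1) e_i. *)
Definition alt_col (i : nat) : R := if odd i then 1 else -1.
Definition left_col (p i : nat) : R :=
  if odd i then - (i./2 < p)%N%:R else (i./2 <= p)%N%:R.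

Lemma Vcol_left i j : (i < (n.+1).*2)%N -> (j < (n.+1).*2)%N ->
  (endpt i == endpt 0)%:R + \sum_(1 <= l < n.+1) corr a l (endpt i) (endpt j) (endpt 0)
  = left_col j./2 i.
Proof.
move=> ilt jlt; rewrite eq_endpt //.
rewrite (eq_big_nat _ _ (F2 := fun l => (i == l.*2)%:R * (l.*2 <= j)%N%:R
          - (i == l.*2.-1)%:R * (l.*2 <= j)%N%:R)); last first.
  by move=> l l_in; rewrite corr_endpt_left // mulrBr ![(_ <= j)%N%:R * _]mulrC.
rewrite sumrB sum_double_delta sum_double_pred_delta -!natrM !mulnb /left_col.
have := odd_double_half i; have := odd_double_half j.
case: (boolP (odd i)) => odd_i /= i_half j_half.
  by rewrite (_ : (i == 0%N) = false) ?add0r ?sub0r; [congr (- _%:R) | ]; lia.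
by rewrite subr0 -natrD; congr _%:R; lia.
Qed.

Definition right_col (p i : nat) : R :=
  if odd i then (p <= i./2)%N%:R else - (p < i./2)%N%:R.

Lemma right_colE p i : right_col p i = alt_col i + left_col p i.
Proof.
rewrite /right_col /alt_col /left_col.
by case: odd; [case: (leqP p i./2) | case: (leqP i./2 p)] => _ /=; lra.
Qed.

Lemma Vcol_right i j : (i < (n.+1).*2)%N -> (j < (n.+1).*2)%N ->
  (endpt i == endpt n.*2.+1)%:R
    + \sum_(1 <= l < n.+1) corr a l (endpt i) (endpt j) (endpt n.*2.+1)
  = right_col j./2 i.
Proof.
move=> ilt jlt; have last_lt : (n.*2.+1 < (n.+1).*2)%N by lia.
rewrite eq_endpt //.
rewrite (eq_big_nat _ _ (F2 := fun l => (i == l.*2.-1)%:R * (j <= l.*2.-1)%N%:R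
          - (i == l.*2)%:R * (j <= l.*2.-1)%N%:R)); last first.
  by move=> l l_in; rewrite corr_endpt_right // mulrBr ![(j <= _)%N%:R * _]mulrC.
rewrite sumrB sum_double_delta sum_double_pred_delta -!natrM !mulnb /right_col.
have := odd_double_half i; have := odd_double_half j.
case: (boolP (odd i)) => odd_i /= i_half j_half.
  by rewrite subr0 -natrD; congr _%:R; lia.
by rewrite (_ : (i == n.*2.+1) = false) ?add0r ?sub0r; [congr (- (1 *+ _)) | ]; lia.
Qed.

Definition cell_wt (c : nat) : R := if cell_lap c is Some k then wt rho g beta k else 0.
Definition cell_qw (c : nat) : R :=
  if cell_lap c is Some k then `|Fder rho g k| `^ (- beta) else 0.
Definition right_wt (j : nat) : R :=
  if cell_lap j./2 is Some k then
    (if (0 < Fder rho g k) == odd j then wt rho g beta k else 0)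
  else 0.

Definition vbasis (k i : nat) : R := if k is p.+1 then left_col p i else alt_col i.
Definition vcoord (k j : nat) : R :=
  if k is c.+1 then (j./2 == c)%:R * cell_wt c else right_wt j.
Definition Vbasis : 'M[R]_((n.+1).*2, n.+2) := \matrix_(i, k) vbasis k i.
Definition Vcoord : 'M[R]_(n.+2, (n.+1).*2) := \matrix_(k, j) vcoord k j.

Lemma Vmx_endpt_factor : Vmx h a rho vrho g beta (n.+1).*2 endpt = Vbasis *m Vcoord.
Proof.
apply/matrixP => i j; have ilt := ltn_ord i; have jlt := ltn_ord j.
rewrite !mxE big_ord_recl !mxE /=.
under eq_bigr => c _ do rewrite !mxE lift0 /= mulrCA eq_sym.
rewrite (sum_ord_delta (fun c => left_col c i * cell_wt c)); last first.
  by have := odd_double_half j; lia.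
rewrite lapof_endpt // /right_wt /cell_wt.
case cell_j: (cell_lap j./2) => [k|] /=; last by rewrite !mulr0 addr0.
have last_lt : (n.*2.+1 < (n.+1).*2)%N by lia.
rewrite (Fimg_endpt (cell_lap_Some cell_j)); case: ifP => _.
  by rewrite normp_endpt // Vcol_right // right_colE /=; ring.
by rewrite normp_endpt // Vcol_left //=; ring.
Qed.

Lemma vbasis_pair k c : vbasis k c.*2 + vbasis k c.*2.+1 = (k == c.+1)%:R.
Proof.
rewrite /vbasis /alt_col /left_col /= odd_double doubleK uphalf_double.
case: k => [|p]; first by rewrite addNr.
by rewrite eqSS eq_sym; case: ltngtP => _ /=; rewrite ?oppr0 ?addr0 ?subrr.
Qed.

Lemma Vcoord_Vbasis_lift c k :
  (Vcoord *m Vbasis) (lift ord0 c) k = (k == lift ord0 c)%:R * cell_wt c.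
Proof.
rewrite mxE; under eq_bigr => j _ do rewrite !mxE lift0.
rewrite (big_ord_double (fun j => vcoord c.+1 j * vbasis k j)).
under eq_bigr => r _ do rewrite /= doubleK uphalf_double -!mulrA -!mulrDr vbasis_pair.
rewrite (sum_ord_delta (fun r => cell_wt c * (k == r.+1 :> nat)%:R)) //.
by rewrite mulrC -lift0 val_eqE.
Qed.

Lemma wtE k :
  wt rho g beta k = (if 0 < Fder rho g k then 1 else -1) * `|Fder rho g k| `^ (- beta).
Proof.
have : Fder rho g k != 0 by rewrite invr_eq0.
rewrite /wt; case: (ltrgtP 0 (Fder rho g k)) => [F_gt0|F_lt0|<-] //= _.
  by rewrite gtr0_sg.
by rewrite ltr0_sg.
Qed.

Lemma Vcoord_Vbasis00 : (Vcoord *m Vbasis) ord0 ord0 = \sum_(c < n.+1) cell_qw c.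
Proof.
rewrite mxE; under eq_bigr => j _ do rewrite !mxE.
rewrite (big_ord_double (fun j => vcoord 0 j * vbasis 0 j)); apply: eq_bigr => c _.
rewrite /= /right_wt /alt_col /cell_qw /= doubleK uphalf_double odd_double.
case: (cell_lap c) => [k|] /=; last by rewrite !mul0r addr0.
by rewrite wtE; case: (0 < Fder rho g k) => /=; ring.
Qed.

Lemma det1BZ_Vmx_endpt t :
  \det (1%:M - t *: Vmx h a rho vrho g beta (n.+1).*2 endpt)
  = (1 - t * \sum_(c < n.+1) cell_qw c) * \prod_(c < n.+1) (1 - t * cell_wt c).
Proof.
rewrite Vmx_endpt_factor scalemxAl det1B_mulmxC -scalemxAr -Vcoord_Vbasis00.
by apply: det1BZ_diag_below_row0 => c k; rewrite Vcoord_Vbasis_lift.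
Qed.

Lemma Fbr_onto (k : 'I_n) :
  [set x | a 0%N < x < a n.+1]
  `<=` [set Fbr rho vrho g k y | y in [set y | lapL h a k < y < lapR h a k]].
Proof.
move=> x /andP[x_gt x_lt]; have := fmap_ends k; have := rho_neq0 (g k).
rewrite /fmap /Fbr; set r := rho (g k); set v := vrho (g k) => r_neq0 ends.
exists (r * x + v); last by field.
move: ends; case: ifP => r_gt0 [<- <-].
  by rewrite /= !ltrD2r !ltr_pM2l // x_gt x_lt.
have r_lt0 : r < 0 by rewrite lt_neqAle r_neq0 leNgt r_gt0.
by rewrite /= !ltrD2r !(ltr_nM2l r_lt0) x_gt x_lt.
Qed.

Lemma Jlap_a j : (j <= n)%N -> Jlap n h a a j = cell_lap j.
Proof.
move=> j_le; apply: eq_pick => k /=; have k_le := lapli_le_n k.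
by rewrite /lapL /lapR !ler_a //; lia.
Qed.

Lemma det1BZ_Qmx_a t :
  \det (1%:M - t *: Qmx h a rho vrho g beta n.+1 a) = 1 - t * \sum_(c < n.+1) cell_qw c.
Proof.
apply: det1BZ_const_cols => i j; have j_le : (j <= n)%N by rewrite -ltnS.
have i_le : (i <= n)%N by rewrite -ltnS.
rewrite mxE Jlap_a // /cell_qw.
case cell_j: (cell_lap j) => [k|] //; rewrite asboolT ?mul1r //.
move=> x /andP[x_gt x_lt]; rewrite -(cell_lap_Some cell_j); apply: Fbr_onto.
by rewrite /= (le_lt_trans _ x_gt) ?(lt_le_trans x_lt) // ler_a //; lia.
Qed.

Lemma prod_cell_wt t :
  \prod_(c < n.+1) (1 - t * cell_wt c) = \det (1%:M - t *: Kmx rho g beta).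
Proof.
rewrite /Kmx det1BZ_diag (bigD1_ord (Ordinal (h_le_n : (h < n.+1)%N))) //=.
rewrite /cell_wt cell_lap_hole mulr0 subr0 mul1r; apply: eq_bigr => k _.
by rewrite mxE -lapliE cell_lap_lapli.
Qed.

Lemma Vmx_ext q y y' : (forall i, (i < q)%N -> y i = y' i) ->
  Vmx h a rho vrho g beta q y = Vmx h a rho vrho g beta q y'.
Proof. by move=> yy'; apply/matrixP => i j; rewrite !mxE !yy'. Qed.

Lemma Qmx_ext m z z' : (forall i, (i <= m)%N -> z i = z' i) ->
  Qmx h a rho vrho g beta m z = Qmx h a rho vrho g beta m z'.
Proof.
move=> zz'; apply/matrixP => i j; have ilt := ltn_ord i; have jlt := ltn_ord j.
by rewrite !mxE /Jlap !zz' // ltnW.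
Qed.

Lemma entries_endpt q y :
  (forall i, (i.+1 < q)%N -> lexlt (y i) (y i.+1)) ->
  (forall p, Ent h a rho vrho g p <-> exists2 i, (i < q)%N & y i = p) ->
  q = (n.+1).*2 /\ (forall i, (i < q)%N -> y i = endpt i).
Proof.
move=> y_incr y_Ent.
have [] := sorted_enum_eq (@lexlt_irr R) (@lexlt_trans R) _ y_incr
  (f := endpt) (N := (n.+1).*2).
- by move=> i ilt; rewrite lexlt_endpt // ltnW.
- by move=> p; split=> [/Ent_endptP/y_Ent | /y_Ent/Ent_endptP].
by move=> <- endpt_y; split=> // i /endpt_y.
Qed.

Lemma partition_a m z :
  (forall i, (i < m)%N -> z i < z i.+1) ->
  (forall x, Pos h a rho vrho g x <-> exists2 i, (i <= m)%N & z i = x) ->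
  m = n.+1 /\ (forall i, (i <= m)%N -> z i = a i).
Proof.
move=> z_incr z_Pos.
have [] := sorted_enum_eq (@ltxx _ R) (@lt_trans _ R) _ _
  (f := z) (N := m.+1) (g := a) (M := n.+2).
- by move=> i; rewrite ltnS => /z_incr.
- by move=> i; rewrite ltnS => /a_incr.
- by move=> x; split=> [/z_Pos/Pos_aP | /Pos_aP/z_Pos].
by move=> [->] z_a; split=> // i; rewrite -ltnS => /z_a.
Qed.

Lemma det1BZ_Vmx_QmxKmx t :
  \det (1%:M - t *: Vmx h a rho vrho g beta (n.+1).*2 endpt)
  = \det (1%:M - t *: Qmx h a rho vrho g beta n.+1 a)
    * \det (1%:M - t *: Kmx rho g beta).
Proof. by rewrite det1BZ_Vmx_endpt det1BZ_Qmx_a prod_cell_wt. Qed.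

End FullBranchIFS.

Theorem theorem1 (R : realType) (n h : nat) (a : nat -> R) (rho vrho : 'I_n -> R)
  (g : {perm 'I_n}) (beta : R) (q : nat) (y : nat -> R * bool)
  (m : nat) (z : nat -> R) :
  (0 < h)%N -> (h < n)%N ->
  (forall i, (i <= n)%N -> a i < a i.+1) ->
  (forall i, 0 < `|rho i| < 1) ->
  (forall k : 'I_n, fmap rho vrho (g k) @` [set x | a 0%N <= x <= a n.+1]
                    = [set x | lapL h a k <= x <= lapR h a k]) ->
  (forall e, osend n a e -> finite_set (Forbit h a rho vrho g e)) ->
  (forall i j, (i < j < q)%N -> lexlt (y i) (y j)) ->
  (forall p, Ent h a rho vrho g p <-> exists2 i, (i < q)%N & y i = p) ->
  (forall i, (i < m)%N -> z i < z i.+1) ->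
  (forall x, Pos h a rho vrho g x <-> exists2 i, (i <= m)%N & z i = x) ->
  forall t : R,
    \det (1%:M - t *: Vmx h a rho vrho g beta q y)
    = \det (1%:M - t *: Qmx h a rho vrho g beta m z)
      * \det (1%:M - t *: Kmx rho g beta).
Proof.
move=> _ /ltnW h_le_n a_incr rho_bounds fmap_onto_lap _ y_sorted y_Ent z_incr z_Pos t.
have rho_neq0 i : rho i != 0 by rewrite -normr_gt0; case/andP: (rho_bounds i).
have y_incr i : (i.+1 < q)%N -> lexlt (y i) (y i.+1).
  by move=> iq; apply: y_sorted; rewrite leqnn.
have [q_eq y_endpt] := entries_endpt h_le_n a_incr rho_neq0 fmap_onto_lap y_incr y_Ent.
have [m_eq z_a] := partition_a h_le_n a_incr rho_neq0 fmap_onto_lap z_incr z_Pos.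
subst q m; rewrite (Vmx_ext h a rho vrho g beta y_endpt) (Qmx_ext h a rho vrho g beta z_a).
exact: det1BZ_Vmx_QmxKmx.
Qed.
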